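(* For every positive integer $k$, $$\sum_{r=1}^{2k} r!\,{2k\brace r}=\sum_{p=1}^{k}\sum_{q=1}^{k}{k\brace p}{k\brace q}\,p!\,q!\,D(p,q).$$
   Context: ${k\brace r}$ denotes the Stirling number of the second kind (number of partitions of a $k$-element set into $r$ nonempty blocks). $D(m,n)$ is the Delannoy number, defined for nonnegative integers $m,n$ by $D(m,n)=1$ if $mn=0$, and $D(m,n)=D(m-1,n)+D(m-1,n-1)+D(m,n-1)$ if $mn\neq0$. *)

From mathcomp Require Import all_boot.

Fixpoint stirling2 (n k : nat) : nat :=
  match n, k with
  | 0, 0 => 1
  | 0, _.+1 => 0
  | _.+1, 0 => 0
  | n'.+1, k'.+1 => k'.+1 * stirling2 n' k'.+1 + stirling2 n' k'
  end.

(* Delannoy numbers: D(m,n)=1 if mn=0, else D(m-1,n)+D(m-1,n-1)+D(m,n-1). *)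
Fixpoint delannoy (m n : nat) : nat :=
  match m with
  | 0 => 1
  | m'.+1 =>
    let fix aux (n : nat) : nat :=
      match n with
      | 0 => 1
      | n'.+1 => delannoy m' n + delannoy m' n' + aux n'
      end
    in aux n
  end.

Example stirling2_test : [:: stirling2 4 1; stirling2 4 2; stirling2 4 3; stirling2 4 4; stirling2 5 2] = [:: 1; 7; 6; 1; 15].
Proof. by []. Qed.
Example delannoy_test : [:: delannoy 1 1; delannoy 2 2; delannoy 3 3; delannoy 2 3] = [:: 3; 13; 63; 25].
Proof. by []. Qed.

From mathcomp Require Import all_boot zify.

(* Write s_n(p) = p! S(n,p) for the number of surjections of an n-set onto a
   p-set.  Then s_(n+1) = T s_n with (T u)(p) = p (u(p) + u(p-1)), and T is
   self-adjoint for the bilinear form <u, v> = sum_(p,q) u(p) v(q) D(p,q):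
   summation by parts moves T onto the kernel as w |-> p w(p) + (p+1) w(p+1),
   and this transform of D(p,q) in p equals its transform in q.  Hence
   <s_k, s_k> = <s_k, T^k s_0> = <s_(2k), s_0> = sum_p s_(2k)(p),
   as D(p, 0) = 1 and s_0 is the indicator of 0.  All sums can be cut at any
   bound beyond 2k since s_n(p) = 0 for p > n. *)

Lemma delannoySS m n :
  delannoy m.+1 n.+1 = delannoy m n.+1 + delannoy m n + delannoy m.+1 n.
Proof. by []. Qed.

Lemma delannoy0n n : delannoy 0 n = 1. Proof. by []. Qed.

Lemma delannoyn0 m : delannoy m 0 = 1. Proof. by case: m. Qed.

Lemma delannoy1n n : delannoy 1 n = 2 * n + 1.
Proof. by elim: n => [|n IHn] //; rewrite delannoySS IHn !delannoy0n; lia. Qed.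

Lemma delannoyn1 m : delannoy m 1 = 2 * m + 1.
Proof. by elim: m => [|m IHm] //; rewrite delannoySS IHm !delannoyn0; lia. Qed.

Definition surj_op (u : nat -> nat) (p : nat) := p * (u p + u p.-1).

Definition surj_op_adj (w : nat -> nat) (p : nat) := p * w p + p.+1 * w p.+1.

Lemma delannoy_adj_sym p q :
  surj_op_adj (delannoy^~ q) p = surj_op_adj (delannoy p) q.
Proof.
rewrite /surj_op_adj; elim: p q => [|p IHp] q.
  by rewrite delannoy1n !delannoy0n; lia.
elim: q => [|q IHq]; first by rewrite !delannoyn0 delannoyn1; lia.
have := IHp q.+1; have := IHp q.
by rewrite !delannoySS in IHq *; lia.
Qed.

Lemma sum_surj_op_adj K (u w : nat -> nat) : u K = 0 ->
  \sum_(0 <= p < K.+1) surj_op u p * w p =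
  \sum_(0 <= p < K.+1) u p * surj_op_adj w p.
Proof.
move=> uK0; rewrite /surj_op /surj_op_adj.
under eq_bigr do rewrite mulnDr mulnDl.
under [RHS]eq_bigr do rewrite mulnDr.
rewrite !big_split /=; congr (_ + _).
  by apply: eq_bigr => p _; rewrite mulnCA mulnA.
rewrite big_nat_recl // big_nat_recr //= uK0 !mul0n add0n addn0.
by apply: eq_bigr => p _; rewrite mulnCA mulnA.
Qed.

Lemma surj_op_adj_sum (I : Type) (r : seq I) (c : I -> nat) (f : I -> nat -> nat) p :
  surj_op_adj (fun p => \sum_(i <- r) c i * f i p) p =
  \sum_(i <- r) c i * surj_op_adj (f i) p.
Proof.
rewrite /surj_op_adj !big_distrr -big_split /=.
by apply: eq_bigr => i _; rewrite mulnDr mulnCA [_ * (c i * _)]mulnCA.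
Qed.

Definition delannoy_form K (u v : nat -> nat) :=
  \sum_(0 <= p < K.+1) u p * \sum_(0 <= q < K.+1) v q * delannoy p q.

Lemma eq_delannoy_form K {u1 u2 v1 v2 : nat -> nat} : u1 =1 u2 -> v1 =1 v2 ->
  delannoy_form K u1 v1 = delannoy_form K u2 v2.
Proof.
move=> eq_u eq_v; apply: eq_bigr => p _; rewrite eq_u; congr (_ * _).
by apply: eq_bigr => q _; rewrite eq_v.
Qed.

Lemma delannoy_form_surj_op_sym K u v : u K = 0 -> v K = 0 ->
  delannoy_form K (surj_op u) v = delannoy_form K u (surj_op v).
Proof.
move=> uK0 vK0; rewrite /delannoy_form sum_surj_op_adj //.
apply: eq_bigr => p _; congr (_ * _).
rewrite surj_op_adj_sum sum_surj_op_adj //.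
by apply: eq_bigr => q _; rewrite delannoy_adj_sym.
Qed.

Definition surj n p := p`! * stirling2 n p.

Lemma stirling2_eq0 n p : n < p -> stirling2 n p = 0.
Proof. by elim: n p => [|n IHn] [|p] //= lt_np; rewrite !IHn //; lia. Qed.

Lemma surj_eq0 n p : n < p -> surj n p = 0.
Proof. by move=> lt_np; rewrite /surj stirling2_eq0 ?muln0. Qed.

Lemma surj0n p : surj 0 p = (p == 0).
Proof. by case: p => [|p] //; rewrite /surj muln0. Qed.

Lemma surjn0 n : 0 < n -> surj n 0 = 0.
Proof. by case: n => [|n] //; rewrite /surj muln0. Qed.

Lemma surjS n : surj n.+1 =1 surj_op (surj n).
Proof. by case=> [|p]; rewrite /surj_op /surj ?muln0 //= factS; nia. Qed.

Lemma delannoy_form_surj K a b : a + b < K ->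
  delannoy_form K (surj a) (surj b) = delannoy_form K (surj (a + b)) (surj 0).
Proof.
elim: b a => [|b IHb] a lt_abK; first by rewrite addn0.
rewrite (eq_delannoy_form _ (frefl _) (surjS b)) -delannoy_form_surj_op_sym;
  try by apply: surj_eq0; lia.
rewrite -(eq_delannoy_form _ (surjS a) (frefl _)) IHb; last by lia.
by rewrite addSnnS.
Qed.

Lemma delannoy_form_surj0 K u :
  delannoy_form K u (surj 0) = \sum_(0 <= p < K.+1) u p.
Proof.
apply: eq_bigr => p _; rewrite big_ltn // big_nat big1 => [|q /andP[q_gt0 _]].
  by rewrite delannoyn0 addn0 !muln1.
by rewrite surj0n eqn0Ngt q_gt0.
Qed.

Lemma big_nat_trunc m n1 n2 (F : nat -> nat) : m <= n1 <= n2 ->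
  (forall i, n1 <= i < n2 -> F i = 0) ->
  \sum_(m <= i < n2) F i = \sum_(m <= i < n1) F i.
Proof.
move=> /andP[le_mn1 le_n12] F0; rewrite (big_cat_nat le_mn1 le_n12) /=.
by rewrite [X in _ + X]big_nat [X in _ + X]big1 ?addn0 // => i /F0.
Qed.

Lemma sum_surj_supp n K (F : nat -> nat) : 0 < n <= K ->
  \sum_(0 <= p < K.+1) surj n p * F p = \sum_(1 <= p < n.+1) surj n p * F p.
Proof.
move=> /andP[n_gt0 le_nK]; rewrite big_ltn // surjn0 // add0n.
by apply: big_nat_trunc => [|i /andP[lt_ni _]]; rewrite ?surj_eq0 //; lia.
Qed.

Theorem corollary1 (k : nat) (hk : 0 < k) :
  \sum_(1 <= r < (2 * k).+1) r`! * stirling2 (2 * k) r =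
  \sum_(1 <= p < k.+1) \sum_(1 <= q < k.+1)
     stirling2 k p * stirling2 k q * p`! * q`! * delannoy p q.
Proof.
rewrite mul2n -addnn.
have le_kK : 0 < k <= (k + k).+1 by lia.
transitivity (\sum_(0 <= p < (k + k).+2) surj (k + k) p * 1).
  by rewrite sum_surj_supp; [apply: eq_bigr => r _; rewrite muln1 | lia].
under eq_bigr do rewrite muln1.
rewrite -delannoy_form_surj0 -delannoy_form_surj //.
rewrite /delannoy_form sum_surj_supp //; apply: eq_bigr => p _.
rewrite sum_surj_supp // big_distrr; apply: eq_bigr => q _.
by rewrite /surj /=; lia.
Qed.
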